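(* Let $n,k,t$ be positive integers with $k<n$ and $t\ge 4$, let $q$ be a prime power and $\mathcal{D}$ the Desarguesian $(t-1)$-spread of $\mathrm{PG}(nt-1,q)$. Let $\nu$ be a $\mathcal{D}_{n-k-1}$-subspace, $\Pi$ an $(nt-kt+1)$-dimensional subspace containing $\nu$ such that the points of $\mathcal{B}(\Pi)$ span an $(n-k+1)$-dimensional subspace of $\mathrm{PG}(n-1,q^t)$, $\Omega$ an $(nt-kt-2)$-dimensional subspace of $\Pi$ meeting $\nu$ in an $(nt-kt-4)$-dimensional subspace, $\Gamma$ a plane of $\Pi$ skew from $\Omega$, $\bar{B}$ a minimal blocking set of $\Gamma$ disjoint from $\nu$, and $K$ the cone with vertex $\Omega$ and base $\bar{B}$. Then $$|\mathcal{B}(K)|=|\bar{B}|(q^{nt-kt-1}-q^{nt-kt-3})+q^{nt-kt-2}+q^{nt-kt-3}+\epsilon$$ for some integer $\epsilon\ge 1$.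
   Context: Field reduction: each point of $\mathrm{PG}(n-1,q^t)$ corresponds to a $(t-1)$-dimensional subspace of $\mathrm{PG}(nt-1,q)$; these form the Desarguesian $(t-1)$-spread $\mathcal{D}$. A $\mathcal{D}_{r-1}$-subspace is an $(rt-1)$-dimensional subspace spanned by elements of $\mathcal{D}$. For $U\subseteq\mathrm{PG}(nt-1,q)$, $\mathcal{B}(U)$ is the set of elements of $\mathcal{D}$ meeting $U$, identified with points of $\mathrm{PG}(n-1,q^t)$. The cone with vertex $\Omega$ and base $\bar{B}$ is $\bigcup_{P\in\bar B}\langle P,\Omega\rangle$. A minimal blocking set of a plane is a point set meeting every line, no proper subset of which does so. *)

(* Field reduction model:
   GF(q^t) = L (a finite field with #|L| = q^t), GF(q) = {x in L | x^q = x},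
   V(n, q^t) = 'rV[L]_n, viewed as an (nt)-dimensional GF(q)-space.
   Projective subspaces of PG(nt-1,q) = GF(q)-subspaces of V (as vector sets);
   elements of the Desarguesian spread = 1-dim L-subspaces of V. *)
From mathcomp Require Import all_boot all_order all_algebra.
Set Implicit Arguments. Unset Strict Implicit. Unset Printing Implicit Defensive.
Import GRing.Theory.
Local Open Scope ring_scope.

Definition is_prime_power (q : nat) : Prop :=
  exists p e : nat, [/\ prime p, (0 < e)%N & q = (p ^ e)%N].

Section FieldReduction.
Variables (L : finFieldType) (q : nat) (n : nat).
Local Notation V := 'rV[L]_n.

Definition Fq : {set L} := [set x | x ^+ q == x].

Definition qsub (W : {set V}) : bool :=
  [&& 0 \in W, [forall x in W, forall y in W, x + y \in W]
    & [forall c in Fq, forall x in W, c *: x \in W]].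

(* W is a projective subspace of PG(nt-1,q) of projective dimension m
   (GF(q)-vector dimension m+1, i.e. q^(m+1) vectors) *)
Definition pdim (W : {set V}) (m : nat) : Prop :=
  qsub W /\ #|W| = (q ^ m.+1)%N.

Definition qspan (S : {set V}) : {set V} :=
  [set v | [forall W : {set V}, (qsub W && (S \subset W)) ==> (v \in W)]].

(* L-subspaces of V, i.e. projective subspaces of PG(n-1,q^t) *)
Definition Lsub (W : {set V}) : bool :=
  [&& 0 \in W, [forall x in W, forall y in W, x + y \in W]
    & [forall c : L, forall x in W, c *: x \in W]].

Definition Lspan (S : {set V}) : {set V} :=
  [set v | [forall W : {set V}, (Lsub W && (S \subset W)) ==> (v \in W)]].

Definition Ldim (W : {set V}) (d : nat) : Prop :=
  Lsub W /\ #|W| = (#|L| ^ d.+1)%N.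

Definition Lline (v : V) : {set V} := [set c *: v | c : L].

Definition spread_elt (X : {set V}) : Prop :=
  exists2 v : V, v != 0 & X = Lline v.

(* B(U): the spread elements meeting U (identified with points of PG(n-1,q^t)) *)
Definition Bset (U : {set V}) : {set {set V}} :=
  [set Lline v | v in U :\ 0].

(* a D_{r-1}-subspace: an (rt-1)-dimensional subspace spanned by spread elements *)
Definition Dsub (t : nat) (nu : {set V}) (r : nat) : Prop :=
  pdim nu (r * t).-1 /\
  exists S : {set {set V}},
    (forall X, X \in S -> spread_elt X) /\ nu = qspan (\bigcup_(X in S) X).

(* points of PG(nt-1,q) are projective subspaces of dimension 0 *)
Definition blocks (Gamma : {set V}) (B : {set {set V}}) : Prop :=
  forall l : {set V}, pdim l 1 -> l \subset Gamma ->
    exists2 P, P \in B & P \subset l.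

Definition minimal_blocking_set (Gamma : {set V}) (B : {set {set V}}) : Prop :=
  [/\ forall P, P \in B -> pdim P 0 /\ P \subset Gamma,
      blocks Gamma B
    & forall B' : {set {set V}}, B' \proper B -> ~ blocks Gamma B'].

Definition cone (Omega : {set V}) (B : {set {set V}}) : {set V} :=
  \bigcup_(P in B) qspan (P :|: Omega).

End FieldReduction.

(* A spread element through a vector v of Pi outside nu meets Pi
   only in the GF(q)-multiples of v: if c v were in Pi with c outside GF(q), then Pi would
   be nu + GF(q) v + GF(q) c v, so the L-span of the points of Pi would lie in nu + L v,
   which is too small.  Hence the spread elements meeting the cone K outside nu account
   for the vectors of K \ nu in groups of q - 1, while those meeting K inside nu form the
   excess eps >= 1 (Omega meets nu nontrivially).  Finally K \ nu is the disjoint union of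
   Omega \ nu and the sets <P, Omega> \ (Omega u nu), P in Bbar, whose sizes follow from
   the dimension formula |A + B| |A n B| = |A| |B|. *)
From mathcomp Require Import all_boot all_order all_algebra.
From mathcomp Require Import finfield zify ring.
Set Implicit Arguments. Unset Strict Implicit. Unset Printing Implicit Defensive.
Import GRing.Theory.
Local Open Scope ring_scope.

Lemma scalerlI (F : fieldType) (V : lmodType F) (v : V) :
  v != 0 -> injective (fun c : F => c *: v).
Proof.
move=> v0 c d /eqP; rewrite -subr_eq0 -scalerBl scaler_eq0 (negbTE v0) orbF subr_eq0.
by move/eqP.
Qed.

Lemma prime_power_gt1 q : is_prime_power q -> (1 < q)%N.
Proof. by case=> p [e] [pp e0 ->]; rewrite -(exp1n e) ltn_exp2r // prime_gt1. Qed.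

Lemma geometric_sumn q t : (1 <= q)%N -> ((q - 1) * (\sum_(i < t) q ^ i) + 1 = q ^ t)%N.
Proof.
move=> q1; elim: t => [|t IH]; first by rewrite big_ord0 muln0.
rewrite big_ord_recr /= mulnDr -addnAC IH expnS mulnBl mul1n addnC subnK //.
by rewrite leq_pmull // expn_gt0 q1.
Qed.

(** * The subfield GF(q) *)

Section Subfield.
Variables (L : finFieldType) (q t : nat).
Hypothesis prime_power_q : is_prime_power q.
Hypothesis card_L : #|L| = (q ^ t)%N.
Local Notation Fq := (Fq L q).

Let q_gt1 := prime_power_gt1 prime_power_q.

Lemma pchar_nat_q : [pchar L].-nat q.
Proof.
case: prime_power_q => p [e] [pp e0 qE].
have pL : p \in [pchar L].
  by apply: (@card_finPcharP _ p (e * t)) => //; rewrite expnM -qE -card_L.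
by rewrite qE pnatX (pnatE _ pp) pL.
Qed.

Lemma mem_Fq x : (x \in Fq) = (x ^+ q == x).
Proof. by rewrite inE. Qed.

Lemma Fq0 : 0 \in Fq.
Proof. by rewrite mem_Fq expr0n; case: q q_gt1. Qed.

Lemma Fq1 : 1 \in Fq.
Proof. by rewrite mem_Fq expr1n. Qed.

Lemma FqD x y : x \in Fq -> y \in Fq -> x + y \in Fq.
Proof. by rewrite !mem_Fq (exprDn_pchar _ _ pchar_nat_q) => /eqP-> /eqP->. Qed.

Lemma FqN x : x \in Fq -> - x \in Fq.
Proof. by rewrite !mem_Fq (exprNn_pchar _ pchar_nat_q) => /eqP->. Qed.

Lemma FqM x y : x \in Fq -> y \in Fq -> x * y \in Fq.
Proof. by rewrite !mem_Fq exprMn => /eqP-> /eqP->. Qed.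

Lemma FqV x : x \in Fq -> x^-1 \in Fq.
Proof. by rewrite !mem_Fq exprVn => /eqP->. Qed.

Lemma card_Fq_le : (#|Fq| <= q)%N.
Proof.
set p : {poly L} := 'X^q - 'X.
have size_p : size p = q.+1 by rewrite size_polyDl ?size_polyXn // size_polyN size_polyX.
have p_neq0 : p != 0 by rewrite -size_poly_eq0 size_p.
rewrite cardE -ltnS -size_p max_poly_roots ?enum_uniq //.
by apply/allP => x; rewrite mem_enum mem_Fq => /eqP xq; rewrite /root !hornerE xq subrr.
Qed.

Hypothesis t_gt0 : (0 < t)%N.

Let s := (\sum_(i < t) q ^ i)%N.
Let s_gt0 : (0 < s)%N.
Proof. by rewrite /s -(prednK t_gt0) big_ord_recl expn0. Qed.

(* Writing q^t - 1 = (q - 1) s, every x outside GF(q) makes y = x^(q-1) an s-th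
   root of unity other than 1, hence a root of 1 + y + ... + y^(s-1). *)
Lemma root_compl_Fq x : x \notin Fq -> root (\sum_(j < s) 'X^((q - 1) * j)) x.
Proof.
move=> xF; have x0 : x != 0 by apply: contraNneq xF => ->; exact: Fq0.
set y := x ^+ (q - 1).
have y1 : y != 1.
  apply: contraNneq xF => y1; rewrite mem_Fq.
  by rewrite -{1}(subnK (ltnW q_gt1)) exprD -/y y1 mul1r expr1.
have ys : y ^+ s = 1.
  have : x ^+ (q ^ t) = x by rewrite -card_L expf_card.
  rewrite -(geometric_sumn t (ltnW q_gt1)) exprD expr1 exprM => xq.
  by apply: (mulIf x0); rewrite mul1r.
have : (y - 1) * \sum_(i < s) y ^+ i = 0 by rewrite -subrX1 ys subrr.
move/eqP; rewrite mulf_eq0 subr_eq0 (negbTE y1) /= => /eqP sum_y.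
rewrite /root horner_sum -[X in _ == X]sum_y; apply/eqP; apply: eq_bigr => j _.
by rewrite hornerXn exprM.
Qed.

Lemma card_Fq_ge : (q <= #|Fq|)%N.
Proof.
set r : {poly L} := \sum_(j < s) 'X^((q - 1) * j).
have r_neq0 : r != 0.
  apply: contraTneq isT => r0; have : r.[0] = 1.
    rewrite /r horner_sum -(prednK s_gt0) big_ord_recl /= muln0 hornerXn expr0n /=.
    rewrite big1 ?addr0 // => j _.
    by rewrite hornerXn expr0n muln_eq0 subn_eq0 leqNgt q_gt1.
  by rewrite r0 horner0 => /eqP; rewrite eq_sym oner_eq0.
have size_r : (size r <= (q - 1) * (s - 1) + 1)%N.
  apply: leq_trans (size_sum _ _ _) _; apply/bigmax_leqP => j _.
  rewrite size_polyXn addn1 ltnS leq_mul2l; apply/orP; right.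
  by rewrite -ltnS subn1 prednK.
have roots_r : (#|~: Fq| < size r)%N.
  rewrite cardE max_poly_roots ?enum_uniq //.
  by apply/allP => x; rewrite mem_enum inE; exact: root_compl_Fq.
have := cardsC Fq; rewrite card_L -(geometric_sumn t (ltnW q_gt1)) -/s.
have : (q - 1 <= (q - 1) * s)%N by rewrite leq_pmulr.
move: (leq_trans roots_r size_r); rewrite mulnBr muln1; lia.
Qed.

Lemma card_Fq : #|Fq| = q.
Proof. by apply/eqP; rewrite eqn_leq card_Fq_le card_Fq_ge. Qed.

End Subfield.

Lemma card_uniform_fibers (aT rT : finType) (f : aT -> rT) (A : {set aT}) k :
  (forall x, x \in A -> #|[set y in A | f y == f x]| = k) -> #|A| = (#|f @: A| * k)%N.
Proof.
move=> fibers; rewrite -sum1_card (partition_big_imset f) -sum_nat_const /=.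
by apply: eq_bigr => _ /imsetP[x xA ->]; rewrite sum1dep_card fibers.
Qed.

Lemma card_bigcup_disjoint (I T : finType) (A : {set I}) (F : I -> {set T}) :
  {in A &, forall i j, i != j -> [disjoint F i & F j]} ->
  #|\bigcup_(i in A) F i| = (\sum_(i in A) #|F i|)%N.
Proof.
move=> disjA; rewrite -!big_enum /=; have : uniq (enum A) := enum_uniq A.
have : {subset enum A <= A} by move=> i; rewrite mem_enum.
elim: (enum A) => [|i s IH] /= sA; first by rewrite !big_nil cards0.
case/andP => i_notin_s uniq_s; rewrite !big_cons cardsU -IH //; last first.
  by move=> j js; apply: sA; rewrite inE js orbT.
suff /disjoint_setI0-> : [disjoint F i & \bigcup_(j <- s) F j] by rewrite cards0 subn0.
rewrite -setI_eq0 big_distrr /= big_seq; apply/eqP/big1 => j js.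
apply/disjoint_setI0; apply: disjA; rewrite ?sA ?inE ?eqxx ?js ?orbT //.
by apply: contraNneq i_notin_s => ->.
Qed.

Lemma exists_notin (T : finType) (A B : {set T}) :
  (#|A| < #|B|)%N -> exists2 x, x \in B & x \notin A.
Proof.
move=> AB; case: (boolP (B \subset A)) => [/subset_leq_card|/subsetPn//].
by rewrite leqNgt AB.
Qed.

(** * GF(q)-subspaces of V(n, q^t) *)

Section Subspaces.
Variables (L : finFieldType) (q t n : nat).
Hypothesis prime_power_q : is_prime_power q.
Hypothesis card_L : #|L| = (q ^ t)%N.
Local Notation V := 'rV[L]_n.
Local Notation Fq := (Fq L q).
Local Notation qsub := (qsub q).
Local Notation qspan := (qspan q).

Let q_gt1 := prime_power_gt1 prime_power_q.

Lemma qsubP (W : {set V}) : qsub W <->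
  [/\ 0 \in W, forall x y, x \in W -> y \in W -> x + y \in W
    & forall c x, c \in Fq -> x \in W -> c *: x \in W].
Proof.
split.
  case/and3P => W0 /forall_inP WD /forall_inP WZ; split => // [x y xW|c x cF].
    by move: (WD x xW) => /forall_inP; apply.
  by move: (WZ c cF) => /forall_inP; apply.
case=> W0 WD WZ; apply/and3P; split => //.
  by apply/forall_inP => x xW; apply/forall_inP => y yW; apply: WD.
by apply/forall_inP => c cF; apply/forall_inP => x xW; apply: WZ.
Qed.

Section Closure.
Variable W : {set V}.
Hypothesis qsubW : qsub W.

Lemma qsub0 : 0 \in W. Proof. by case/qsubP: qsubW. Qed.

Lemma qsubD x y : x \in W -> y \in W -> x + y \in W.
Proof. by case/qsubP: qsubW => _ WD _; apply: WD. Qed.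

Lemma qsubZ c x : c \in Fq -> x \in W -> c *: x \in W.
Proof. by case/qsubP: qsubW => _ _ WZ; apply: WZ. Qed.

Lemma qsubN x : x \in W -> - x \in W.
Proof. by rewrite -scaleN1r; apply: qsubZ; exact: (FqN prime_power_q card_L (Fq1 L q)). Qed.

Lemma qsubB x y : x \in W -> y \in W -> x - y \in W.
Proof. by move=> xW yW; rewrite qsubD ?qsubN. Qed.

End Closure.

Definition sumset (A B : {set V}) : {set V} := [set x.1 + x.2 | x in setX A B].

Lemma mem_sumset (A B : {set V}) v :
  (v \in sumset A B) <-> exists a b, [/\ a \in A, b \in B & v = a + b].
Proof.
split; first by case/imsetP => -[a b]; rewrite inE /= => /andP[aA bB] ->; exists a, b.
by case=> a [b] [aA bB ->]; apply/imsetP; exists (a, b); rewrite // inE aA bB.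
Qed.

Lemma sumset_sub (A B W : {set V}) :
  qsub W -> A \subset W -> B \subset W -> sumset A B \subset W.
Proof.
move=> qW /subsetP AW /subsetP BW; apply/subsetP => _ /mem_sumset[a [b [aA bB ->]]].
by rewrite (qsubD qW) ?(AW a) ?(BW b).
Qed.

Lemma sumsetSl (A B : {set V}) : qsub B -> A \subset sumset A B.
Proof. by move=> qB; apply/subsetP => a aA; apply/mem_sumset; exists a, 0; rewrite addr0 qsub0. Qed.

Lemma sumsetSr (A B : {set V}) : qsub A -> B \subset sumset A B.
Proof. by move=> qA; apply/subsetP => b bB; apply/mem_sumset; exists 0, b; rewrite add0r qsub0. Qed.

Lemma qsub_sumset (A B : {set V}) : qsub A -> qsub B -> qsub (sumset A B).
Proof.
move=> qA qB; apply/qsubP; split.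
- by apply/mem_sumset; exists 0, 0; rewrite addr0 !qsub0.
- move=> _ _ /mem_sumset[a [b [aA bB ->]]] /mem_sumset[a' [b' [aA' bB' ->]]].
  by apply/mem_sumset; exists (a + a'), (b + b'); rewrite !qsubD // addrACA.
- move=> c _ cF /mem_sumset[a [b [aA bB ->]]].
  by apply/mem_sumset; exists (c *: a), (c *: b); rewrite scalerDr !qsubZ.
Qed.

Lemma card_sumset_le (A B : {set V}) : (#|sumset A B| <= #|A| * #|B|)%N.
Proof. by rewrite -cardsX leq_imset_card. Qed.

(* The fibre of (a, b) |-> a + b over a0 + b0 is {(a0 + d, b0 - d) | d in A :&: B}. *)
Lemma card_sumset (A B : {set V}) : qsub A -> qsub B ->
  (#|sumset A B| * #|A :&: B| = #|A| * #|B|)%N.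
Proof.
move=> qA qB; rewrite -[RHS]cardsX.
rewrite (@card_uniform_fibers _ _ (fun x => x.1 + x.2) (setX A B) #|A :&: B|) //.
move=> [a0 b0]; rewrite inE /= => /andP[a0A b0B].
have addI : injective (fun d : V => (a0 + d, b0 - d)) by move=> d d' [/addrI].
rewrite -(card_imset _ addI); apply: eq_card => -[a b]; rewrite !inE /=.
apply/andP/imsetP => [[/andP[aA bB] /eqP ab]|[d]]; last first.
  rewrite inE => /andP[dA dB] [-> ->]; split; first by rewrite qsubD ?qsubB.
  by rewrite addrACA subrr addr0.
have ba : b0 - b = a - a0 by apply/eqP; rewrite subr_eq addrAC ab addrAC subrr add0r.
exists (a - a0); first by rewrite inE qsubB // -ba qsubB.
by congr (_, _); [rewrite addrC subrK|rewrite -ba opprB addrC subrK].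
Qed.

Lemma qspanP (S : {set V}) v :
  reflect (forall W, qsub W -> S \subset W -> v \in W) (v \in qspan S).
Proof.
rewrite inE; apply: (iffP forallP) => [vS W qW SW|vS W].
  by move: (vS W); rewrite qW SW.
by apply/implyP => /andP[qW SW]; apply: vS.
Qed.

Lemma qspan_sub (S W : {set V}) : qsub W -> S \subset W -> qspan S \subset W.
Proof. by move=> qW SW; apply/subsetP => v /qspanP; apply. Qed.

Lemma sub_qspan (S : {set V}) : S \subset qspan S.
Proof. by apply/subsetP => v vS; apply/qspanP => W _ /subsetP; apply. Qed.

Lemma qsub_qspan (S : {set V}) : qsub (qspan S).
Proof.
apply/qsubP; split.
- by apply/qspanP => W qW _; apply: qsub0.
- move=> x y /qspanP xS /qspanP yS; apply/qspanP => W qW SW.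
  by rewrite qsubD ?xS ?yS.
- move=> c x cF /qspanP xS; apply/qspanP => W qW SW.
  by rewrite qsubZ ?xS.
Qed.

Lemma qspan_sumset (A B : {set V}) : qsub A -> qsub B -> qspan (A :|: B) = sumset A B.
Proof.
move=> qA qB; apply/eqP; rewrite eqEsubset qspan_sub ?qsub_sumset ?subUset ?sumsetSl ?sumsetSr //.
by rewrite sumset_sub ?qsub_qspan // (subset_trans _ (sub_qspan _)) ?subsetUl ?subsetUr.
Qed.

(* The v such that c v lies in the span form a GF(q)-subspace containing S. *)
Lemma qspan_Lclosed (S : {set V}) c v :
  (forall c x, x \in S -> c *: x \in S) -> v \in qspan S -> c *: v \in qspan S.
Proof.
move=> SL /qspanP /(_ [set y | c *: y \in qspan S]).
have memW y : (y \in [set y | c *: y \in qspan S]) = (c *: y \in qspan S) by rewrite in_set.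
rewrite memW; apply; last first.
  by apply/subsetP => x xS; rewrite memW (subsetP (sub_qspan S)) ?SL.
apply/qsubP; split => [|x y|a x aF]; rewrite !memW.
- by rewrite scaler0 qsub0 ?qsub_qspan.
- by rewrite scalerDr => cx cy; exact: (qsubD (qsub_qspan S) cx cy).
- by rewrite scalerA mulrC -scalerA => cx; exact: (qsubZ (qsub_qspan S) aF cx).
Qed.

Lemma Dsub_Lclosed (nu : {set V}) r c x : Dsub q t nu r -> x \in nu -> c *: x \in nu.
Proof.
case=> _ [S [Sspread ->]]; apply: qspan_Lclosed => {}c y /bigcupP[X XS yX].
apply/bigcupP; exists X => //; case: (Sspread X XS) yX => v _ -> /imsetP[d _ ->].
by apply/imsetP; exists (c * d); rewrite ?scalerA.
Qed.

Hypothesis t_gt0 : (0 < t)%N.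

Definition qpoint (x : V) : {set V} := [set c *: x | c in Fq].

Lemma qsub_qpoint (x : V) : qsub (qpoint x).
Proof.
apply/qsubP; split.
- by apply/imsetP; exists 0; rewrite ?scale0r ?(Fq0 L prime_power_q).
- move=> _ _ /imsetP[c cF ->] /imsetP[d dF ->]; apply/imsetP; exists (c + d).
    exact: (FqD prime_power_q card_L).
  by rewrite scalerDl.
- move=> a _ aF /imsetP[c cF ->]; apply/imsetP; exists (a * c); first exact: FqM.
  by rewrite scalerA.
Qed.

Lemma qpoint_sub (W : {set V}) x : qsub W -> x \in W -> qpoint x \subset W.
Proof. by move=> qW xW; apply/subsetP => _ /imsetP[c cF ->]; apply: qsubZ. Qed.

Lemma card_qpoint (x : V) : x != 0 -> #|qpoint x| = q.
Proof.
by move=> x0; rewrite card_imset ?(card_Fq prime_power_q card_L t_gt0) //; apply: scalerlI.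
Qed.

Lemma qpoint_eq (P : {set V}) p : qsub P -> #|P| = q -> p \in P -> p != 0 -> P = qpoint p.
Proof. by move=> qP cP pP p0; apply/eqP; rewrite eq_sym eqEcard qpoint_sub //= cP card_qpoint. Qed.

Lemma setI_qpoint (W : {set V}) x : qsub W -> x \notin W -> W :&: qpoint x = [set 0].
Proof.
move=> qW xW; apply/eqP; rewrite eqEsubset andbC sub1set inE qsub0 // (qsub0 (qsub_qpoint x)) /=.
apply/subsetP => y /setIP[yW /imsetP[c cF yE]]; rewrite inE yE.
apply: contraR xW; rewrite scaler_eq0 => /norP[c0 _].
by rewrite -[x]scale1r -(mulVf c0) -scalerA qsubZ ?FqV // -yE.
Qed.

Lemma card_sumset_qpoint (W : {set V}) x :
  qsub W -> x \notin W -> #|sumset W (qpoint x)| = (#|W| * q)%N.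
Proof.
move=> qW xW; have x0 : x != 0 by apply: contraNneq xW => ->; apply: qsub0.
by have := card_sumset qW (qsub_qpoint x); rewrite setI_qpoint // cards1 muln1 card_qpoint.
Qed.

(** * Spread elements *)

Lemma LsubP (W : {set V}) : Lsub W <->
  [/\ 0 \in W, forall x y, x \in W -> y \in W -> x + y \in W
    & forall c x, x \in W -> c *: x \in W].
Proof.
split.
  case/and3P => W0 /forall_inP WD /forallP WZ; split => // [x y xW|c x].
    by move: (WD x xW) => /forall_inP; apply.
  by move: (WZ c) => /forall_inP; apply.
case=> W0 WD WZ; apply/and3P; split => //.
  by apply/forall_inP => x xW; apply/forall_inP => y yW; apply: WD.
by apply/forallP => c; apply/forall_inP => x xW; apply: WZ.
Qed.

Lemma Lsub_qsub (W : {set V}) : Lsub W -> qsub W.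
Proof. by case/LsubP => W0 WD WZ; apply/qsubP; split => // c x _; apply: WZ. Qed.

Lemma mem_Lline (v : V) : v \in Lline v.
Proof. by apply/imsetP; exists 1; rewrite ?scale1r. Qed.

Lemma Lsub_Lline (v : V) : Lsub (Lline v).
Proof.
apply/LsubP; split.
- by apply/imsetP; exists 0; rewrite ?scale0r.
- by move=> _ _ /imsetP[c _ ->] /imsetP[d _ ->]; apply/imsetP; exists (c + d); rewrite ?scalerDl.
- by move=> a _ /imsetP[c _ ->]; apply/imsetP; exists (a * c); rewrite ?scalerA.
Qed.

Lemma LlineZ c (v : V) : c != 0 -> Lline (c *: v) = Lline v.
Proof.
move=> c0; apply/setP => y; apply/imsetP/imsetP => -[d _ ->].
  by exists (d * c); rewrite ?scalerA.
by exists (d / c); rewrite // scalerA mulfVK.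
Qed.

Lemma Lsub_sumset (A B : {set V}) : Lsub A -> Lsub B -> Lsub (sumset A B).
Proof.
move=> /LsubP[A0 AD AZ] /LsubP[B0 BD BZ]; apply/LsubP; split.
- by apply/mem_sumset; exists 0, 0; rewrite addr0.
- move=> _ _ /mem_sumset[a [b [aA bB ->]]] /mem_sumset[a' [b' [aA' bB' ->]]].
  by apply/mem_sumset; exists (a + a'), (b + b'); rewrite AD ?BD // addrACA.
- move=> c _ /mem_sumset[a [b [aA bB ->]]].
  by apply/mem_sumset; exists (c *: a), (c *: b); rewrite scalerDr AZ ?BZ.
Qed.

Lemma Lspan_sub (S W : {set V}) : Lsub W -> S \subset W -> Lspan S \subset W.
Proof. by move=> LW SW; apply/subsetP => v; rewrite inE => /forallP/(_ W); rewrite LW SW. Qed.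

Section ScalarsInPi.
Variables nu Pi : {set V}.
Hypotheses (qsub_nu : qsub nu) (nu_Lclosed : forall c x, x \in nu -> c *: x \in nu).
Hypotheses (qsub_Pi : qsub Pi) (nu_sub_Pi : nu \subset Pi) (card_Pi : #|Pi| = (#|nu| * q ^ 2)%N).
Hypothesis card_Lspan_Pi : (#|nu| * #|L| < #|Lspan (\bigcup_(X in Bset Pi) X)|)%N.

Lemma qpoint_cv_notin (v : V) c :
  v \notin nu -> c \notin Fq -> c *: v \notin sumset nu (qpoint v).
Proof.
move=> vnu cF; apply/negP => /mem_sumset[w [_ [wnu /imsetP[a aF ->] cvE]]].
have ca : c - a != 0 by rewrite subr_eq0; apply: contraNneq cF => ->.
by move: vnu; rewrite -[v]scale1r -(mulVf ca) -scalerA scalerBl cvE addrK nu_Lclosed.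
Qed.

(* If c v lay in Pi for some c outside GF(q), Pi would be nu + GF(q) v + GF(q) c v,
   whose L-span nu + L v is too small. *)
Lemma Fq_scalar_in_Pi (v : V) c : v \in Pi -> v \notin nu -> c *: v \in Pi -> c \in Fq.
Proof.
move=> vPi vnu cvPi; apply: contraTT card_Lspan_Pi => cF; rewrite -leqNgt.
set T := sumset nu (Lline v).
have Lsub_nu : Lsub nu.
  by apply/LsubP; split=> [|x y|]; [apply: qsub0 | apply: qsubD | apply: nu_Lclosed].
have LT : Lsub T by rewrite Lsub_sumset ?Lsub_Lline.
have vT : v \in T by rewrite (subsetP (sumsetSr _ (Lsub_qsub Lsub_nu))) ?mem_Lline.
have PiE : sumset (sumset nu (qpoint v)) (qpoint (c *: v)) = Pi.
  apply/eqP; rewrite eqEcard !sumset_sub ?qpoint_sub //=.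
  rewrite !card_sumset_qpoint ?qsub_sumset ?qsub_qpoint ?qpoint_cv_notin //.
  by rewrite card_Pi -mulnA.
have PiT : Pi \subset T.
  rewrite -PiE !sumset_sub ?Lsub_qsub ?qpoint_sub ?sumsetSl ?Lsub_qsub ?Lsub_Lline //.
  by case/LsubP: LT => _ _ ->.
apply: leq_trans (subset_leq_card (Lspan_sub LT _)) _.
  apply/bigcupsP => _ /imsetP[x /setD1P[_ xPi] ->]; apply/subsetP => _ /imsetP[d _ ->].
  by case/LsubP: LT => _ _ ->; rewrite ?(subsetP PiT).
apply: leq_trans (card_sumset_le _ _) _; rewrite leq_mul2l.
by rewrite (leq_trans (leq_imset_card _ _)) ?max_card ?orbT.
Qed.

End ScalarsInPi.

Section LinesOffNu.
Variables nu U : {set V}.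
Hypotheses (nu0 : 0 \in nu) (nu_Lclosed : forall c x, x \in nu -> c *: x \in nu).

Lemma Lline_notin (x : V) y : x \in nu -> y \notin nu -> y \notin Lline x.
Proof. by move=> xnu; apply: contra => /imsetP[c _ ->]; apply: nu_Lclosed. Qed.

Lemma card_Bset_split :
  #|Bset U| = (#|Bset (U :&: nu)| + #|[set Lline x | x in U :\: nu]|)%N.
Proof.
have UE : U :\ 0 = (U :&: nu) :\ 0 :|: U :\: nu.
  apply/setP => x; rewrite !inE; case xnu: (x \in nu); rewrite ?andbT ?andbF ?orbF //=.
  by case: eqP xnu => // ->; rewrite nu0.
rewrite /Bset UE imsetU cardsU; suff -> : [set Lline x | x in (U :&: nu) :\ 0] :&:
    [set Lline x | x in U :\: nu] = set0 by rewrite cards0 subn0.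
apply/setP => l; rewrite !inE; apply/negbTE/negP.
case/andP => /imsetP[x /setD1P[_ /setIP[_ xnu]] ->] /imsetP[y /setDP[_ ynu] Lxy].
by move: (mem_Lline y); rewrite -Lxy; apply/negP/Lline_notin.
Qed.

Hypotheses (U_Fqclosed : forall c x, c \in Fq -> x \in U -> c *: x \in U)
  (U_Fq_scalar : forall x c, x \in U -> x \notin nu -> c *: x \in U -> c \in Fq).

Lemma Lline_fibre x : x \in U :\: nu ->
  [set y in U :\: nu | Lline y == Lline x] = [set c *: x | c in Fq :\ 0].
Proof.
case/setDP => xU xnu; apply/setP => y; rewrite !inE; apply/idP/imsetP.
  case/andP => /andP[ynu yU] /eqP Lyx.
  have /imsetP[c _ yE] : y \in Lline x by rewrite -Lyx mem_Lline.
  exists c => //; rewrite in_setD1 (U_Fq_scalar xU xnu) -?yE // andbT.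
  by apply: contraNneq ynu => c0; rewrite yE c0 scale0r.
case=> c /setD1P[c0 cF] ->.
rewrite U_Fqclosed // LlineZ // eqxx !andbT.
by apply: contra xnu => /(nu_Lclosed c^-1); rewrite scalerA mulVf ?scale1r.
Qed.

(* Each spread element meeting U outside nu does so in exactly the q - 1
   nonzero GF(q)-multiples of one vector. *)
Lemma card_setD_Lline : #|U :\: nu| = (#|[set Lline x | x in U :\: nu]| * (q - 1))%N.
Proof.
apply: card_uniform_fibers => x xUnu; rewrite Lline_fibre // card_imset; last first.
  by apply: scalerlI; case/setDP: xUnu => _; apply: contraNneq => ->.
rewrite -[X in _ = (X - 1)%N](card_Fq prime_power_q card_L t_gt0) (cardsD1 0 Fq).
by rewrite (Fq0 L prime_power_q) add1n subn1.
Qed.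

End LinesOffNu.

Lemma blocks_neq0 (Gamma : {set V}) (B : {set {set V}}) d :
  pdim q Gamma d.+1 -> blocks q Gamma B -> B != set0.
Proof.
case=> qG cG blocksB.
have [x xG x0] : exists2 x, x \in Gamma & x \notin [set 0].
  by apply: exists_notin; rewrite cards1 cG -(expn0 q) ltn_exp2l.
rewrite in_set1 in x0.
have [y yG yx] : exists2 y, y \in Gamma & y \notin qpoint x.
  by apply: exists_notin; rewrite card_qpoint // cG -{1}(expn1 q) ltn_exp2l.
have line_xy : pdim q (sumset (qpoint x) (qpoint y)) 1.
  split; first by rewrite qsub_sumset ?qsub_qpoint.
  by rewrite card_sumset_qpoint ?qsub_qpoint // card_qpoint.
have [P PB _] := blocksB _ line_xy (sumset_sub qG (qpoint_sub qG xG) (qpoint_sub qG yG)).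
by apply/set0Pn; exists P.
Qed.

(** * Counting the cone *)

Section Cone.
Variables (nu Pi Omega Gamma : {set V}) (Bbar : {set {set V}}) (r : nat).
Hypotheses (qsub_nu : qsub nu) (card_nu : #|nu| = (q ^ (r + 3))%N).
Hypotheses (qsub_Pi : qsub Pi) (card_Pi : #|Pi| = (q ^ (r + 5))%N) (nu_sub_Pi : nu \subset Pi).
Hypotheses (qsub_Omega : qsub Omega) (card_Omega : #|Omega| = (q ^ (r + 2))%N).
Hypotheses (card_Omega_nu : #|Omega :&: nu| = (q ^ r)%N) (Omega_sub_Pi : Omega \subset Pi).
Hypotheses (qsub_Gamma : qsub Gamma) (Gamma_sub_Pi : Gamma \subset Pi).
Hypothesis Omega_Gamma : Omega :&: Gamma = [set 0].
Hypothesis points_Bbar : forall P, P \in Bbar -> pdim q P 0 /\ P \subset Gamma.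

Let cancel_pow x a b : (x * q ^ a = q ^ (b + a))%N -> x = (q ^ b)%N.
Proof. by rewrite expnD => /eqP; rewrite eqn_pmul2r ?expn_gt0 ?(ltnW q_gt1) // => /eqP. Qed.

Let C (P : {set V}) := qspan (P :|: Omega).

Lemma qsub_cone_component P : qsub (C P).
Proof. exact: qsub_qspan. Qed.

Lemma Omega_sub_cone_component P : Omega \subset C P.
Proof. exact: subset_trans (subsetUr P Omega) (sub_qspan _). Qed.

Section Point.
Variable P : {set V}.
Hypothesis PB : P \in Bbar.

Lemma qsub_point : qsub P. Proof. by case: (points_Bbar PB) => -[]. Qed.
Lemma card_point : #|P| = q. Proof. by case: (points_Bbar PB) => -[_ ->]. Qed.
Lemma point_sub_Gamma : P \subset Gamma. Proof. by case: (points_Bbar PB). Qed.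

Lemma cone_component_sumset : C P = sumset P Omega.
Proof. exact: qspan_sumset qsub_point qsub_Omega. Qed.

Lemma cone_component_sub_Pi : C P \subset Pi.
Proof. by rewrite qspan_sub // subUset Omega_sub_Pi (subset_trans point_sub_Gamma). Qed.

Lemma card_cone_component : #|C P| = (q ^ (r + 3))%N.
Proof.
have P_Omega : P :&: Omega = [set 0].
  apply/eqP; rewrite eqEsubset sub1set inE (qsub0 qsub_point) (qsub0 qsub_Omega) andbT.
  by rewrite -Omega_Gamma setIC setIS ?point_sub_Gamma.
have := card_sumset qsub_point qsub_Omega.
by rewrite -cone_component_sumset P_Omega cards1 muln1 card_point card_Omega -expnS -addnS.
Qed.

(* C P + nu lies in Pi and contains Omega + nu, which already fills Pi. *)
Lemma card_cone_component_nu : #|C P :&: nu| = (q ^ (r + 1))%N.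
Proof.
have card_Omega_nu_sum : #|sumset Omega nu| = (q ^ (r + 5))%N.
  apply: (@cancel_pow _ r); rewrite -card_Omega_nu card_sumset // card_Omega card_nu -expnD.
  by congr (_ ^ _)%N; ring.
have card_C_nu_sum : #|sumset (C P) nu| = (q ^ (r + 5))%N.
  apply/eqP; rewrite eqn_leq -{1}card_Pi subset_leq_card ?sumset_sub ?cone_component_sub_Pi //=.
  rewrite -card_Omega_nu_sum subset_leq_card //; apply/subsetP => _ /mem_sumset[a [b [aO bnu ->]]].
  by apply/mem_sumset; exists a, b; rewrite (subsetP (Omega_sub_cone_component P)).
apply: (@cancel_pow _ (r + 5)); rewrite mulnC -card_C_nu_sum card_sumset ?qsub_cone_component //.
by rewrite card_cone_component card_nu -expnD; congr (_ ^ _)%N; ring.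
Qed.

End Point.

Lemma cone_component_disjoint P P' : P \in Bbar -> P' \in Bbar -> P != P' ->
  C P :&: C P' \subset Omega.
Proof.
move=> PB P'B neqPP'; rewrite !cone_component_sumset //; apply/subsetP => x.
case/setIP => /mem_sumset[p [w [pP wO ->]]] /mem_sumset[p' [w' [pP' wO' e]]].
have pp' : p = p'.
  have : p - p' \in Omega :&: Gamma.
    have pG := subsetP (point_sub_Gamma PB) _ pP.
    have p'G := subsetP (point_sub_Gamma P'B) _ pP'.
    rewrite inE (qsubB qsub_Gamma pG p'G) andbT.
    have -> : p - p' = w' - w by apply/eqP; rewrite subr_eq addrAC (addrC w') -e addrK.
    by rewrite qsubB.
  by rewrite Omega_Gamma inE subr_eq0 => /eqP.
have [->|p0] := eqVneq p 0; first by rewrite add0r.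
have p'0 : p' != 0 by rewrite -pp'.
case/negP: neqPP'; apply/eqP.
rewrite (qpoint_eq (qsub_point PB) (card_point PB) pP p0).
by rewrite (qpoint_eq (qsub_point P'B) (card_point P'B) pP' p'0) pp'.
Qed.

Let D (P : {set V}) := C P :\: (Omega :|: nu).

Lemma card_cone_component_off P : P \in Bbar -> #|D P| = ((q ^ (r + 2) - q ^ r) * (q - 1))%N.
Proof.
move=> PB; have Omega_C := Omega_sub_cone_component P.
have := cardsID (Omega :|: nu) (C P).
rewrite setIUr (setIidPr Omega_C) card_cone_component //.
have := cardsUI Omega (C P :&: nu).
rewrite setIA (setIidPl Omega_C) card_Omega_nu card_Omega card_cone_component_nu //.
rewrite !expnD; move: (q ^ r)%N (#|D P|) (#|_ :|: _|) (ltnW q_gt1) => a d u; nia.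
Qed.

Lemma card_Omega_off : #|Omega :\: nu| = ((q ^ (r + 1) + q ^ r) * (q - 1))%N.
Proof.
have := cardsID nu Omega; rewrite card_Omega_nu card_Omega !expnD.
move: (q ^ r)%N (#|Omega :\: nu|) (ltnW q_gt1) => a x; nia.
Qed.

Lemma cone_sub_Pi : cone q Omega Bbar \subset Pi.
Proof. by apply/bigcupsP => P PB; apply: cone_component_sub_Pi. Qed.

Lemma cone_Fqclosed c x : c \in Fq -> x \in cone q Omega Bbar -> c *: x \in cone q Omega Bbar.
Proof.
move=> cF /bigcupP[P PB xC]; apply/bigcupP; exists P => //.
by rewrite (qsubZ (qsub_cone_component P)).
Qed.

Hypothesis Bbar_neq0 : Bbar != set0.

Lemma Omega_sub_cone : Omega \subset cone q Omega Bbar.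
Proof.
case/set0Pn: Bbar_neq0 => P PB.
exact: subset_trans (Omega_sub_cone_component P) (bigcup_sup P PB).
Qed.

Lemma cone_off_nu :
  cone q Omega Bbar :\: nu = Omega :\: nu :|: \bigcup_(P in Bbar) D P.
Proof.
apply/setP => x; rewrite in_setU !in_setD; apply/idP/idP.
  case/andP => xnu /bigcupP[P PB xC]; case xO: (x \in Omega); first by rewrite xnu.
  by apply/orP; right; apply/bigcupP; exists P; rewrite // in_setD in_setU xO (negbTE xnu).
case/orP => [/andP[-> /(subsetP Omega_sub_cone)//]|/bigcupP[P PB]].
rewrite in_setD in_setU negb_or => /andP[/andP[_ ->] xC].
by apply/bigcupP; exists P.
Qed.

Lemma card_cone_off_nu : #|cone q Omega Bbar :\: nu| =
  ((#|Bbar| * (q ^ (r + 2) - q ^ r) + q ^ (r + 1) + q ^ r) * (q - 1))%N.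
Proof.
rewrite cone_off_nu cardsU.
have /disjoint_setI0-> : [disjoint Omega :\: nu & \bigcup_(P in Bbar) D P].
  rewrite disjoint_subset; apply/subsetP => x /setDP[xO _]; rewrite inE.
  by apply/negP => /bigcupP[P _ /setDP[_]]; rewrite in_setU xO.
rewrite cards0 subn0 card_bigcup_disjoint; last first.
  move=> P P' PB P'B neqPP'; rewrite disjoint_subset; apply/subsetP => x /setDP[xC xOnu].
  rewrite inE; apply/negP => /setDP[xC' _].
  have /(subsetP (cone_component_disjoint PB P'B neqPP')) xO : x \in C P :&: C P' by rewrite inE xC.
  by rewrite in_setU xO in xOnu.
rewrite card_Omega_off (eq_bigr _ card_cone_component_off) sum_nat_const; ring.
Qed.

Lemma Bset_cone_nu_gt0 : (0 < r)%N -> (0 < #|Bset (cone q Omega Bbar :&: nu)|)%N.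
Proof.
move=> r_gt0; have [w w_Omega_nu w0] : exists2 w, w \in Omega :&: nu & w \notin [set 0].
  by apply: exists_notin; rewrite cards1 card_Omega_nu -(expn0 q) ltn_exp2l.
case/setIP: w_Omega_nu => wO wnu; rewrite in_set1 in w0.
apply/card_gt0P; exists (Lline w); apply/imsetP; exists w => //.
by rewrite in_setD1 w0 inE wnu (subsetP Omega_sub_cone).
Qed.

Hypothesis nu_Lclosed : forall c x, x \in nu -> c *: x \in nu.
Hypothesis card_Lspan_Pi : (#|nu| * #|L| < #|Lspan (\bigcup_(X in Bset Pi) X)|)%N.

Lemma cone_Fq_scalar x c : x \in cone q Omega Bbar -> x \notin nu ->
  c *: x \in cone q Omega Bbar -> c \in Fq.
Proof.
have card_Pi_nu : #|Pi| = (#|nu| * q ^ 2)%N by rewrite card_Pi card_nu -expnD -addnA.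
move=> xK xnu cxK; apply: (Fq_scalar_in_Pi qsub_nu nu_Lclosed qsub_Pi nu_sub_Pi card_Pi_nu
  card_Lspan_Pi (subsetP cone_sub_Pi _ xK) xnu (subsetP cone_sub_Pi _ cxK)).
Qed.

Lemma card_Bset_cone : #|Bset (cone q Omega Bbar)| = (#|Bset (cone q Omega Bbar :&: nu)|
  + (#|Bbar| * (q ^ (r + 2) - q ^ r) + q ^ (r + 1) + q ^ r))%N.
Proof.
rewrite (card_Bset_split _ (qsub0 qsub_nu) nu_Lclosed); congr (_ + _)%N; apply/eqP.
rewrite -(eqn_pmul2r (_ : 0 < q - 1)%N) ?subn_gt0 // -card_cone_off_nu.
by rewrite (card_setD_Lline (qsub0 qsub_nu) nu_Lclosed cone_Fqclosed cone_Fq_scalar).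
Qed.

End Cone.
End Subspaces.

Theorem proposition4p12 (L : finFieldType) (q n k t : nat)
    (nu Pi Omega Gamma : {set 'rV[L]_n}) (Bbar : {set {set 'rV[L]_n}}) :
  (0 < k)%N -> (k < n)%N -> (4 <= t)%N ->
  is_prime_power q -> #|L| = (q ^ t)%N ->
  Dsub q t nu (n - k) ->
  pdim q Pi (n * t - k * t + 1) -> nu \subset Pi ->
  Ldim (Lspan (\bigcup_(X in Bset Pi) X)) (n - k + 1) ->
  pdim q Omega (n * t - k * t - 2) -> Omega \subset Pi ->
  pdim q (Omega :&: nu) (n * t - k * t - 4) ->
  pdim q Gamma 2 -> Gamma \subset Pi -> Omega :&: Gamma = [set 0] ->
  minimal_blocking_set q Gamma Bbar ->
  (forall P, P \in Bbar -> P :&: nu = [set 0]) ->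
  exists eps : int, 1 <= eps /\
    (#|Bset (cone q Omega Bbar)|%:Z =
       #|Bbar|%:Z * ((q ^ (n * t - k * t - 1))%:Z - (q ^ (n * t - k * t - 3))%:Z)
       + (q ^ (n * t - k * t - 2))%:Z + (q ^ (n * t - k * t - 3))%:Z + eps).
Proof.
move=> _ k_lt_n t_ge4 prime_power_q card_L Dsub_nu [qsub_Pi card_Pi] nu_sub_Pi.
move=> [_ card_Lspan] [qsub_Omega card_Omega] Omega_sub_Pi [_ card_Omega_nu] Gamma_plane.
move=> Gamma_sub_Pi Omega_Gamma [points_Bbar blocks_Bbar _] _.
have t_gt0 : (0 < t)%N by apply: leq_trans t_ge4.
set m := (n * t - k * t)%N in card_Pi card_Omega card_Omega_nu *.
have mE : ((n - k) * t)%N = m by rewrite mulnBl.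
have m_ge4 : (4 <= m)%N by rewrite -mE (leq_trans t_ge4) // leq_pmull // subn_gt0.
set r := (m - 3)%N.
have [e_Pi e_Omega e_Omega_nu e_nu] :
    [/\ (m + 1).+1 = r + 5, (m - 2).+1 = r + 2, (m - 4).+1 = r & m = r + 3]%N.
  by rewrite /r; clear -m_ge4; split; lia.
have [-> ->] : (m - 1 = r + 2 /\ m - 2 = r + 1)%N.
  by rewrite /r; clear -m_ge4; split; lia.
rewrite e_Pi in card_Pi; rewrite e_Omega in card_Omega; rewrite e_Omega_nu in card_Omega_nu.
have [qsub_nu card_nu] : qsub q nu /\ #|nu| = (q ^ (r + 3))%N.
  by case: Dsub_nu => -[qsub_nu ->] _; rewrite mE prednK -?e_nu // (leq_trans _ m_ge4).
have nu_Lclosed c x : x \in nu -> c *: x \in nu := Dsub_Lclosed c Dsub_nu.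
have card_Lspan_Pi : (#|nu| * #|L| < #|Lspan (\bigcup_(X in Bset Pi) X)|)%N.
  rewrite card_Lspan card_nu card_L -expnD -expnM ltn_exp2l ?prime_power_gt1 //.
  have -> : (t * (n - k + 1).+1 = r + 3 + t + t)%N by rewrite -e_nu -mE; ring.
  by rewrite -[X in (X < _)%N]addn0 ltn_add2l.
have [qsub_Gamma _] := Gamma_plane.
have Bbar_neq0 := blocks_neq0 prime_power_q card_L t_gt0 Gamma_plane blocks_Bbar.
exists #|Bset (cone q Omega Bbar :&: nu)|%:Z; split.
  rewrite lez_nat (Bset_cone_nu_gt0 prime_power_q card_Omega_nu Bbar_neq0) //.
  by rewrite /r; clear -m_ge4; lia.
rewrite (card_Bset_cone prime_power_q card_L t_gt0 qsub_nu card_nu qsub_Pi card_Pi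
  nu_sub_Pi qsub_Omega card_Omega card_Omega_nu Omega_sub_Pi qsub_Gamma Gamma_sub_Pi
  Omega_Gamma points_Bbar Bbar_neq0 nu_Lclosed card_Lspan_Pi).
rewrite subzn; last by rewrite leq_pexp2l ?leq_addr // ltnW ?prime_power_gt1.
by rewrite !PoszD PoszM; ring.
Qed.
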